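(* Let $(\mathbf F,\prec)$ be an IS-family over a finite set $V$. Let $S\in\mathbf F$ and $v\in Vis(S)\setminus S$. Then there is $S^*\in\mathbf F$ with $S^*\prec S$ such that $v\in hat(S^* )$ and $S$ is the witness of $v$ w.r.t. $S^*$.
   Context: Let $V$ be a finite set, $n=|V|$, $\mathbf F$ a family of subsets of $V$ and $\prec$ a strict partial order on $\mathbf F$; $S\preceq S'$ means $S\prec S'$ or $S=S'$. For $S\in\mathbf F$ and $v\in V$, $S$ covers $v$ if there is $S'\in\mathbf F$ with $S'\prec S$ and $v\in S'\setminus S$. $Pred(S)$ is the set of $S'\in\mathbf F$ with $S'\prec S$ such that there is no $S''\in\mathbf F$ with $S'\prec S''\prec S$. The visible set $Vis(S)$ is the set of $v\in V$ such that $v\in S'$ for some $S'\in Pred(S)$ and $v$ is not covered by any element of $Pred(S)$. For $S\in\mathbf F$ and $v\in S$, a witness of $v$ w.r.t. $S$ is a $\prec$-minimal element $S'\in\mathbf F$ with $S\prec S'$ and $v\in S\setminus S'$. $(\mathbf F,\prec)$ is an IS-family if: (SE) there is a unique element $sm(\mathbf F)\in\mathbf F$ with $sm(\mathbf F)\prec S$ for every other $S\in\mathbf F$; (SM) $S_1\prec S_2$ implies $|S_1|<|S_2|$; (SW) for every $S\in\mathbf F$ and $v\in S$ there is at most one witness of $v$ w.r.t. $S$; (TE) if $S_1\prec S_2\prec S_3$ are in $\mathbf F$ and $v\in S_1\setminus S_2$ then $v\in S_1\setminus S_3$; (LVS) for every $S\in\mathbf F$ and $S'\in Pred(S)$, $|S'|\le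 |Vis(S)|$; (DVS) for every $S\in\mathbf F$ with $S\ne sm(\mathbf F)$, $Vis(S)$ is not a subset of $S$; (EC) $sm(\mathbf F)$ can be computed in $O(n^3)$ time, for given $S\in\mathbf F$ and $v\in S$ the witness of $v$ w.r.t. $S$ can be computed (or its nonexistence reported) in $O(n^3)$ time, and $S_1\prec S_2$ can be tested in $O(|S_1|)$ time. Notation: $hat(S)=S\setminus\bigcup_{S'\prec S}S'$. *)

From mathcomp Require Import all_boot.
Set Implicit Arguments. Unset Strict Implicit. Unset Printing Implicit Defensive.

Section ISFamily.
Variables (V : finType) (F : {set {set V}}) (prec : rel {set V}).

Definition strict_po : Prop :=
  (forall S, S \in F -> ~~ prec S S) /\
  (forall S1 S2 S3, S1 \in F -> S2 \in F -> S3 \in F ->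
     prec S1 S2 -> prec S2 S3 -> prec S1 S3).

Definition covers (S : {set V}) (v : V) : bool :=
  [exists S' in F, prec S' S && (v \in S' :\: S)].

Definition Pred (S : {set V}) : {set {set V}} :=
  [set S' in F | prec S' S &&
     ~~ [exists S'' in F, prec S' S'' && prec S'' S]].

Definition Vis (S : {set V}) : {set V} :=
  [set v | [exists S' in Pred S, v \in S'] &&
           ~~ [exists S' in Pred S, covers S' v]].

Definition witness (S : {set V}) (v : V) (W : {set V}) : bool :=
  [&& W \in F, prec S W, v \in S :\: W &
     ~~ [exists S'' in F, [&& prec S'' W, prec S S'' & v \in S :\: S'']]].

Definition hat (S : {set V}) : {set V} :=
  S :\: \bigcup_(S' in F | prec S' S) S'.

Definition is_sm (sm : {set V}) : Prop :=
  sm \in F /\ forall S, S \in F -> S != sm -> prec sm S.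

Definition IS_family : Prop :=
  strict_po /\
  (exists sm, is_sm sm /\ forall sm', is_sm sm' -> sm' = sm) /\
  (* (SM) *)
  (forall S1 S2, S1 \in F -> S2 \in F -> prec S1 S2 -> #|S1| < #|S2|) /\
  (forall S v W1 W2, S \in F -> v \in S ->
     witness S v W1 -> witness S v W2 -> W1 = W2) /\
  (* (TE) *)
  (forall S1 S2 S3 v, S1 \in F -> S2 \in F -> S3 \in F ->
     prec S1 S2 -> prec S2 S3 -> v \in S1 :\: S2 -> v \in S1 :\: S3) /\
  (forall S S', S \in F -> S' \in Pred S -> #|S'| <= #|Vis S|) /\
  (forall sm S, is_sm sm -> S \in F -> S != sm -> ~~ (Vis S \subset S)).

End ISFamily.

From mathcomp Require Import all_boot.

Set Implicit Arguments.
Unset Strict Implicit.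
Unset Printing Implicit Defensive.

(* Take [S*] of minimum size among the members of [F] below [S] containing
   [v]; one exists since [v] lies in a predecessor of [S].  By (SM) nothing
   below [S*] contains [v], so [v \in hat S*].  If [S] were not the witness,
   some [U] with [S* < U < S] would miss [v]; a largest element of [F] between
   [U] and [S] is a predecessor of [S] which, by (TE), covers [v] -- against
   the visibility of [v]. *)

Section ISFamilyFacts.

Variables (V : finType) (F : {set {set V}}) (prec : rel {set V}).

Hypothesis prec_trans : forall S1 S2 S3, S1 \in F -> S2 \in F -> S3 \in F ->
  prec S1 S2 -> prec S2 S3 -> prec S1 S3.
Hypothesis prec_card : forall S1 S2, S1 \in F -> S2 \in F ->
  prec S1 S2 -> #|S1| < #|S2|.
Hypothesis prec_setD : forall S1 S2 S3 v, S1 \in F -> S2 \in F -> S3 \in F ->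
  prec S1 S2 -> prec S2 S3 -> v \in S1 :\: S2 -> v \in S1 :\: S3.

Lemma Pred_above U S : U \in F -> prec U S ->
  exists2 P, P \in Pred F prec S & (P == U) || prec U P.
Proof.
move=> UF US.
pose between T := [&& T \in F, prec T S & (T == U) || prec U T].
have betweenU : between U by rewrite /between UF US eqxx.
case: (arg_maxnP (fun T : {set V} => #|T|) betweenU) => P /and3P[PF PS UP] Pmax.
exists P => //; rewrite inE PF PS /=.
apply/existsP => -[W /and3P[WF PW WS]].
have betweenW : between W.
  rewrite /between WF WS /=; case/orP: UP => [/eqP <- | UP]; first by rewrite PW orbT.
  by rewrite (prec_trans UF PF WF UP PW) orbT.
by have := Pmax W betweenW; rewrite /= leqNgt prec_card.
Qed.

Lemma Pred_covers Sstar U S v :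
  Sstar \in F -> U \in F -> prec Sstar U -> prec U S -> v \in Sstar :\: U ->
  exists2 P, P \in Pred F prec S & covers F prec P v.
Proof.
move=> SstarF UF SstarU US vSstarU.
have [P PS UP] := Pred_above UF US.
have PF : P \in F by move: PS; rewrite inE => /andP[].
exists P => //; apply/existsP; exists Sstar; rewrite SstarF /=.
case/orP: UP => [/eqP -> | UP]; first by rewrite SstarU.
by rewrite (prec_trans SstarF UF PF SstarU UP) (prec_setD SstarF UF PF SstarU UP).
Qed.

Lemma witness_of_uncovered Sstar S v :
  Sstar \in F -> S \in F -> prec Sstar S -> v \in Sstar :\: S ->
  ~~ [exists P in Pred F prec S, covers F prec P v] -> witness F prec Sstar v S.
Proof.
move=> SstarF SF SstarS vSstarS uncovered.
rewrite /witness SF SstarS vSstarS /=.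
apply/existsP => -[U /and4P[UF US SstarU vSstarU]].
have [P PS Pv] := Pred_covers SstarF UF SstarU US vSstarU.
by move/existsP: uncovered; apply; exists P; rewrite PS.
Qed.

Lemma mem_hat_min_card Sstar S v :
  Sstar \in F -> S \in F -> prec Sstar S -> v \in Sstar ->
  (forall T, T \in F -> prec T S -> v \in T -> #|Sstar| <= #|T|) ->
  v \in hat F prec Sstar.
Proof.
move=> SstarF SF SstarS vSstar Sstar_min.
rewrite inE vSstar andbT; apply/bigcupP => -[U /andP[UF USstar] vU].
have := Sstar_min U UF (prec_trans UF SstarF SF USstar SstarS) vU.
by rewrite leqNgt prec_card.
Qed.

End ISFamilyFacts.

Theorem proposition3 (V : finType) (F : {set {set V}}) (prec : rel {set V})
  (HIS : IS_family F prec) (S : {set V}) (v : V)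
  (HS : S \in F) (Hv : v \in Vis F prec S :\: S) :
  exists Sstar : {set V},
    [/\ Sstar \in F, prec Sstar S, v \in hat F prec Sstar & witness F prec Sstar v S].
Proof.
have [[_ prec_trans] [_ [prec_card [_ [prec_setD _]]]]] := HIS.
move: Hv; rewrite !inE => /and3P[vS /existsP[S0 /andP[S0P vS0]] uncovered].
have [S0F S0S] : S0 \in F /\ prec S0 S by move: S0P; rewrite inE => /and3P[].
pose below T := [&& T \in F, prec T S & v \in T].
have belowS0 : below S0 by rewrite /below S0F S0S vS0.
case: (arg_minnP (fun T : {set V} => #|T|) belowS0) => Sstar /and3P[SstarF SstarS vSstar] Smin.
exists Sstar; split => //.
- apply: (mem_hat_min_card prec_trans prec_card SstarF HS SstarS vSstar) => T TF TS vT.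
  by apply: Smin; rewrite /below TF TS.
- by apply: witness_of_uncovered => //; rewrite inE vS.
Qed.
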